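(* Let $A\in\mathbb{R}^{n\times n}$, $C\in\mathbb{R}^{q\times n}$, $F\in\mathbb{R}^{n\times q}$, $c>0$, let $L=(l_{ij})\in\mathbb{R}^{m\times m}$ be irreducible with $\mathrm{Rank}(L)=m-1$, $l_{ij}\ge0$ for $i\ne j$, $\sum_jl_{ij}=0$, let $\varepsilon>0$ and let $\tilde L=(\tilde l_{ij})$ be $L$ with $l_{11}$ replaced by $l_{11}-\varepsilon$. Let $0>\lambda_1\ge\dots\ge\lambda_m$ be the eigenvalues of $\tilde L$. Suppose either (1) all variational equations $\frac{dz(t)}{dt}=[A+c\lambda_kFC]z(t)$, $k=1,\dots,m$, are exponentially stable; or (2) there exist a positive definite $P$ and $\epsilon>0$ with $\{P(A+c\lambda_kFC)\}^s<-\epsilon I_n$, $k=1,\dots,m$. Then $0$ is exponentially stable for the coupled system $$\dot x_i(t)=Ax_i(t)+c\sum_{j=1}^m\tilde l_{ij}FCx_j(t),\qquad i=1,\dots,m.$$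
   Context: For a square matrix $M$, $\{M\}^s=\frac12(M+M^T)$; $M<-\epsilon I$ means $M+\epsilon I$ is negative definite. *)

From HB Require Import structures.
From mathcomp Require Import all_boot all_order all_algebra.
From mathcomp Require Import all_classical all_reals all_analysis.
Set Implicit Arguments. Unset Strict Implicit. Unset Printing Implicit Defensive.
Import Order.TTheory GRing.Theory Num.Theory.
Import numFieldNormedType.Exports.
Local Open Scope ring_scope.

Section Defs.
Variable R : realType.

Definition qform (n : nat) (M : 'M[R]_n) (v : 'cV[R]_n) : R := (v^T *m M *m v) 0 0.

Definition sympart (n : nat) (M : 'M[R]_n) : 'M[R]_n := 2^-1 *: (M + M^T).

Definition posdef (n : nat) (P : 'M[R]_n) : Prop :=
  P^T = P /\ forall v : 'cV[R]_n, v != 0 -> 0 < qform P v.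

Definition negdef (n : nat) (M : 'M[R]_n) : Prop :=
  M^T = M /\ forall v : 'cV[R]_n, v != 0 -> qform M v < 0.

(* irreducible: no nonempty proper index set S with L i j = 0 for all i in S, j notin S
   (equivalently, no permutation brings L to block triangular form) *)
Definition irreducible_mx (m : nat) (L : 'M[R]_m) : Prop :=
  forall S : {set 'I_m}, (0 < #|S|)%N -> (#|S| < m)%N ->
    exists i, exists j, [/\ i \in S, j \notin S & L i j != 0].

Definition pinned (m : nat) (L : 'M[R]_m) (eps : R) : 'M[R]_m :=
  \matrix_(i, j) (if (i == j) && (nat_of_ord i == 0%N) then L i j - eps else L i j).

Definition lin_exp_stable (n : nat) (M : 'M[R]_n) : Prop :=
  exists K gamma : R, 0 < gamma /\
    forall z : R -> 'cV[R]_n,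
      (forall t : R, is_derive t (1 : R) z (M *m z t)) ->
      forall t, 0 <= t -> `|z t| <= K * expR (- gamma * t) * `|z 0|.

Definition coupled_solution (n q m : nat) (A : 'M[R]_n) (C : 'M[R]_(q, n))
  (F : 'M[R]_(n, q)) (c : R) (Lt : 'M[R]_m) (x : 'I_m -> R -> 'cV[R]_n) : Prop :=
  forall i (t : R), is_derive t (1 : R) (x i)
    (A *m x i t + c *: \sum_(j < m) Lt i j *: (F *m (C *m x j t))).

Definition coupled_exp_stable (n q m : nat) (A : 'M[R]_n) (C : 'M[R]_(q, n))
  (F : 'M[R]_(n, q)) (c : R) (Lt : 'M[R]_m) : Prop :=
  exists K gamma : R, 0 < gamma /\
    forall x : 'I_m -> R -> 'cV[R]_n, coupled_solution A C F c Lt x ->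
      forall t, 0 <= t ->
        \sum_(i < m) `|x i t| <= K * expR (- gamma * t) * \sum_(i < m) `|x i 0|.
End Defs.

(* Write the states x_1, ..., x_m as the columns of a matrix Y, so that the
   coupled system reads Y' = A Y + c F C Y Lt^T.  For an enumeration
   a_1, ..., a_m of the eigenvalues of Lt let W_k = Y p_k(Lt^T) with
   p_k = (X - a_1) ... (X - a_k).  Then
     W_k' = (A + c a_(k+1) F C) W_k + c F C W_(k+1),
   and W_m = 0 by Cayley-Hamilton.  Going down from k = m to k = 0, W_k solves
   an exponentially stable linear equation forced by the exponentially
   decaying W_(k+1), hence decays as well (variation of constants with the
   matrix exponential); W_0 = Y.  Under condition (2) the quadratic form
   z^T P z is a Lyapunov function for every variational equation, so (2)
   implies (1). *)

From HB Require Import structures.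
From mathcomp Require Import all_boot all_order all_algebra.
From mathcomp Require Import all_classical all_reals all_analysis.
From mathcomp Require Import ring lra.
Import Order.TTheory GRing.Theory Num.Theory.
Import numFieldNormedType.Exports.
Local Open Scope classical_set_scope.
Local Open Scope ring_scope.

Set Implicit Arguments. Unset Strict Implicit. Unset Printing Implicit Defensive.

Section MatrixNorm.
Variable R : realType.

Lemma mx_normr_le (p q : nat) (v : 'M[R]_(p, q)) (b : R) :
  0 <= b -> (forall i j, `|v i j| <= b) -> `|v| <= b.
Proof.
move=> b0 vb; rewrite [leLHS]/Num.Def.normr /= mx_normrE.
by apply: bigmax_le => // -[i j] _; exact: vb.
Qed.

Lemma mx_normr_entry (p q : nat) (v : 'M[R]_(p, q)) i j : `|v i j| <= `|v|.
Proof. by rewrite [leRHS]/Num.Def.normr /= mx_normrE; exact: (le_bigmax _ _ (i, j)). Qed.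

Lemma mx_normr_col (p q : nat) (v : 'M[R]_(p, q)) j : `|col j v| <= `|v|.
Proof. by apply: mx_normr_le => // i k; rewrite mxE mx_normr_entry. Qed.

Lemma mx_normr_mulmx (p q r : nat) (v : 'M[R]_(p, q)) (w : 'M[R]_(q, r)) :
  `|v *m w| <= q%:R * `|v| * `|w|.
Proof.
apply: mx_normr_le => [|i k]; first by rewrite !mulr_ge0.
rewrite mxE; apply: (le_trans (ler_norm_sum _ _ _)).
apply: (@le_trans _ _ (\sum_(l < q) `|v| * `|w|)).
  by apply: ler_sum => l _; rewrite normrM ler_pM ?mx_normr_entry.
by rewrite sumr_const card_ord -mulrA mulr_natl.
Qed.

Lemma sum_normr_col_le (p q : nat) (v : 'M[R]_(p, q)) :
  \sum_(j < q) `|col j v| <= q%:R * `|v|.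
Proof.
apply: le_trans (_ : _ <= \sum_(j < q) `|v|) _.
  by apply: ler_sum => j _; exact: mx_normr_col.
by rewrite sumr_const card_ord mulr_natl.
Qed.

Lemma mx_normr_le_sum_col (p q : nat) (v : 'M[R]_(p, q)) : `|v| <= \sum_(j < q) `|col j v|.
Proof.
apply: mx_normr_le => [|i j]; first by rewrite sumr_ge0.
have -> : v i j = col j v i 0 by rewrite mxE.
apply: le_trans (mx_normr_entry _ i 0) _.
by rewrite (bigD1 j) //= lerDl sumr_ge0.
Qed.

Lemma mx_normr_scalar (p : nat) (a : R) : `|a%:M : 'M[R]_p| <= `|a|.
Proof.
apply: mx_normr_le => // i j; rewrite mxE.
by case: (i == j); rewrite ?mulr1n ?mulr0n ?normr0.
Qed.

Lemma mx_normr_trmx_le (p q : nat) (v : 'M[R]_(p, q)) : `|v^T| <= `|v|.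
Proof. by apply: mx_normr_le => // i j; rewrite mxE mx_normr_entry. Qed.

Lemma mx_normr_sqr_le_entries (p q : nat) (v : 'M[R]_(p, q)) (b : R) :
  0 <= b -> (forall i j, v i j ^+ 2 <= b) -> `|v| ^+ 2 <= b.
Proof.
move=> b_ge0 vb; rewrite -(sqr_sqrtr b_ge0) lerXn2r ?nnegrE ?sqrtr_ge0 //.
by apply: mx_normr_le; rewrite ?sqrtr_ge0 // => i j; rewrite -sqrtr_sqr ler_sqrt.
Qed.

Lemma mx_normr_sqr_le (p : nat) (v : 'cV[R]_p) : `|v| ^+ 2 <= (v^T *m v) 0 0.
Proof.
apply: mx_normr_sqr_le_entries => [|i j]; rewrite mxE.
  by rewrite sumr_ge0 // => k _; rewrite mxE -expr2 sqr_ge0.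
rewrite (ord1 j) (bigD1 i) //= mxE -expr2 lerDl.
by rewrite sumr_ge0 // => k _; rewrite mxE -expr2 sqr_ge0.
Qed.

End MatrixNorm.

Section MatrixDerive.
Variable R : realType.

Lemma is_derive_mxP (p q : nat) (f : R -> 'M[R]_(p, q)) (t : R) (df : 'M[R]_(p, q)) :
  is_derive t (1 : R) f df <-> forall i j, is_derive t (1 : R) (fun s => f s i j) (df i j).
Proof.
split=> [fdf i j|fdf].
  have f_der : derivable f t 1 by case: fdf.
  apply: DeriveDef; first exact: (derivable_mxP f t 1).1 f_der i j.
  by have := derive_mx f_der; rewrite derive_val => ->; rewrite mxE.
have f_der : derivable f t 1 by apply/derivable_mxP => i j; case: (fdf i j).
apply: DeriveDef => //; rewrite derive_mx //.
by apply/matrixP => i j; rewrite mxE derive_val.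
Qed.

Lemma is_derive_sumr (W : normedModType R) (k : nat) (h : 'I_k -> R -> W) t
    (dh : 'I_k -> W) :
  (forall l, is_derive t (1 : R) (h l) (dh l)) ->
  is_derive t (1 : R) (fun s => \sum_(l < k) h l s) (\sum_(l < k) dh l).
Proof. by move=> hdh; rewrite -fct_sumE; exact: is_derive_sum. Qed.

Lemma is_derive_mulmx (p q r : nat) (f : R -> 'M[R]_(p, q)) (g : R -> 'M[R]_(q, r))
    t df dg :
  is_derive t (1 : R) f df -> is_derive t (1 : R) g dg ->
  is_derive t (1 : R) (fun s => f s *m g s) (df *m g t + f t *m dg).
Proof.
move=> /is_derive_mxP fdf /is_derive_mxP gdg; apply/is_derive_mxP => i k.
under eq_fun do rewrite mxE.
rewrite !mxE -big_split /=; apply: is_derive_sumr => l.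
have prod_der := is_deriveM (fdf i l) (gdg l k).
apply: is_derive_eq.
by rewrite addrC /GRing.scale /= [g t l k * _]mulrC.
Qed.

Lemma is_derive_trmx (p q : nat) (f : R -> 'M[R]_(p, q)) t df :
  is_derive t (1 : R) f df -> is_derive t (1 : R) (fun s => (f s)^T) df^T.
Proof.
move=> /is_derive_mxP fdf; apply/is_derive_mxP => i j.
by under eq_fun do rewrite mxE; rewrite mxE.
Qed.

Lemma is_derive_reflect (p q : nat) (f : R -> 'M[R]_(p, q)) (T t : R) df :
  is_derive (T - t) (1 : R) f df -> is_derive t (1 : R) (fun s => f (T - s)) (- df).
Proof.
move=> /is_derive_mxP fdf; apply/is_derive_mxP => i j.
have reflect_der : is_derive t (1 : R) (fun s : R => T - s) (-1).
  by have := is_deriveB (is_derive_cst T t (1 : R)) (is_derive_id t (1 : R)); rewrite sub0r.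
have comp_der :=
  @is_derive1_comp _ (fun s => f s i j) (fun s => T - s) t _ _ (fdf i j) reflect_der.
by apply: is_derive_eq; rewrite mxE mulrN1.
Qed.

End MatrixDerive.

Section MatrixExp.
Variables (R : realType) (n : nat) (M : 'M[R]_n).

Let growth := n%:R * `|M| + 1.

Let growth_ge1 : 1 <= growth.
Proof. by rewrite lerDr mulr_ge0. Qed.

Lemma mx_normr_expr k : `|M ^+ k| <= growth ^+ k.
Proof.
elim: k => [|k IHk]; first by rewrite expr0 (le_trans (mx_normr_scalar _ _)) ?normr1.
rewrite !exprS; apply: le_trans (mx_normr_mulmx M (M ^+ k)) _.
by rewrite ler_pM ?mulr_ge0 // lerDl.
Qed.

Definition expmx_coef (q : nat) i j : R^nat := fun k => (M ^+ (k + q)) i j / k`!%:R.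

Lemma pseries_diffs_expmx_coef q i j :
  pseries_diffs (expmx_coef q i j) = expmx_coef q.+1 i j.
Proof.
apply/funext => k; rewrite /pseries_diffs /expmx_coef factS natrM addSnnS.
have k1_neq0 : (k.+1%:R : R) != 0 by rewrite pnatr_eq0.
by rewrite invfM mulrCA mulVKf.
Qed.

Lemma is_cvg_pseries_expmx_coef q i j x : cvgn (pseries (expmx_coef q i j) x).
Proof.
apply: normed_cvg; rewrite /normed_series_of /=.
have growth_ge0 : 0 <= growth by apply: le_trans growth_ge1.
have exp_cvg : cvgn (series (growth ^+ q *: exp_coeff (growth * `|x|))).
  exact/is_cvg_seriesZ/is_cvg_series_exp_coeff.
apply: series_le_cvg exp_cvg.
- by move=> k.
- by move=> k; rewrite /= mulr_ge0 ?exprn_ge0 ?exp_coeff_ge0 ?mulr_ge0.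
move=> k; rewrite /= /expmx_coef /exp_coeff !normrM normfV normr_nat normrX.
apply: (@le_trans _ _ (growth ^+ (k + q) / k`!%:R * `|x| ^+ k)).
  rewrite ler_wpM2r ?exprn_ge0 // ler_wpM2r ?invr_ge0 //.
  exact: le_trans (mx_normr_entry _ i j) (mx_normr_expr _).
by rewrite [leRHS]/GRing.scale /= exprMn exprD /GRing.scale /=; lra.
Qed.

Definition expmx (t : R) : 'M[R]_n :=
  \matrix_(i, j) limn (pseries (expmx_coef 0 i j) t).

Lemma pseries_expmx_coef1 i j x :
  pseries (expmx_coef 1 i j) x =
    (fun k => \sum_(l < n) M i l * pseries (expmx_coef 0 l j) x k) /\
  pseries (expmx_coef 1 i j) x =
    (fun k => \sum_(l < n) pseries (expmx_coef 0 i l) x k * M l j).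
Proof.
rewrite /pseries /series /expmx_coef; split; apply/funext => k /=.
  under eq_bigr do rewrite addn1 exprS mxE mulr_suml mulr_suml.
  rewrite exchange_big /=; apply: eq_bigr => l _.
  by rewrite mulr_sumr; apply: eq_bigr => h _; rewrite addn0 !mulrA.
under eq_bigr do rewrite addn1 exprSr mxE mulr_suml mulr_suml.
rewrite exchange_big /=; apply: eq_bigr => l _.
by rewrite mulr_suml; apply: eq_bigr => h _; rewrite addn0; ring.
Qed.

Lemma lim_pseries_expmx_coef1 i j x :
  limn (pseries (expmx_coef 1 i j) x) = (M *m expmx x) i j /\
  limn (pseries (expmx_coef 1 i j) x) = (expmx x *m M) i j.
Proof.
have [expand_l expand_r] := pseries_expmx_coef1 i j x.
have lim_coef i' j' := @is_cvg_pseries_expmx_coef 0 i' j' x.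
rewrite !mxE; split; [rewrite expand_l|rewrite expand_r];
  apply: cvg_lim => //; apply: cvg_big => //; try exact: add_continuous;
  move=> l _; rewrite mxE.
  exact: cvgMr (lim_coef l j).
exact: cvgMl (lim_coef i l).
Qed.

Lemma expmx_mulmxC x : expmx x *m M = M *m expmx x.
Proof.
apply/matrixP => i j.
by have [<- <-] := lim_pseries_expmx_coef1 i j x.
Qed.

Lemma is_derive_expmx x : is_derive x (1 : R) expmx (M *m expmx x).
Proof.
apply/is_derive_mxP => i j; under eq_fun do rewrite mxE.
have x_lt : `|x| < `| `|x| + 1| by rewrite [ltRHS]ger0_norm ?addr_ge0 // ltrDl.
have := pseries_snd_diffs (@is_cvg_pseries_expmx_coef 0 i j (`|x| + 1)).
rewrite !pseries_diffs_expmx_coef.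
move=> /(_ x (@is_cvg_pseries_expmx_coef _ _ _ _) (@is_cvg_pseries_expmx_coef _ _ _ _) x_lt).
by have [<- _] := lim_pseries_expmx_coef1 i j x.
Qed.

Lemma expmx0 : expmx 0 = 1%:M.
Proof.
apply/matrixP => i j; rewrite mxE; apply: cvg_lim => //.
apply: cvg_near_cst; near=> k.
rewrite -(@prednK k); last by near: k; exists 1%N.
rewrite /pseries /series /= big_nat_recl //= expr0 mulr1.
rewrite big1 ?addr0; last by move=> h _; rewrite expr0n /= mulr0.
by rewrite /expmx_coef /= fact0 invr1 mulr1.
Unshelve. all: by end_near.
Qed.

End MatrixExp.

Lemma mulr_expRN_le (R : realType) (a T : R) :
  0 < a -> 0 <= T -> T * expR (- a * T) <= a^-1.
Proof.
move=> a_gt0 T_ge0.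
have lin_le_exp : a * T <= expR (a * T) by apply: le_trans (expR_ge1Dx _); rewrite lerDr.
have exp_inv : expR (a * T) * expR (- a * T) = 1 by rewrite mulNr expRxMexpNx_1.
have exp_ge0 := expR_ge0 (- a * T).
rewrite -(ler_pM2l a_gt0) mulfV ?gt_eqF // mulrA; nra.
Qed.

Section ExpmxDecay.
Variables (R : realType) (n : nat) (M : 'M[R]_n).

Lemma is_derive_expmx_mulmx p (v : 'M[R]_(n, p)) t :
  is_derive t (1 : R) (fun s => expmx M s *m v) (M *m (expmx M t *m v)).
Proof.
have := is_derive_mulmx (is_derive_expmx M t) (is_derive_cst v t 1).
by rewrite mulmx0 addr0 mulmxA.
Qed.

Lemma expmx_decay : lin_exp_stable M ->
  exists K g : R, [/\ 0 <= K, 0 < g & forall p t (v : 'M[R]_(n, p)), 0 <= t ->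
    `|expmx M t *m v| <= K * expR (- g * t) * `|v|].
Proof.
case=> K [g [g_gt0 stable]]; exists `|K|, g; split=> // p t v t_ge0.
apply: mx_normr_le => [|i j]; first by rewrite !mulr_ge0 ?expR_ge0.
have -> : (expmx M t *m v) i j = (expmx M t *m col j v) i 0.
  by rewrite colE mulmxA -colE [RHS]mxE.
apply: le_trans (mx_normr_entry (expmx M t *m col j v) i 0) _.
have sol_bound := stable _ (is_derive_expmx_mulmx (col j v)) t t_ge0.
rewrite expmx0 mul1mx in sol_bound; apply: le_trans sol_bound _.
rewrite -!mulrA (@le_trans _ _ (`|K| * (expR (- g * t) * `|col j v|))) //.
  by rewrite ler_wpM2r ?mulr_ge0 ?expR_ge0 ?ler_norm.
by rewrite ler_wpM2l // ler_wpM2l ?expR_ge0 ?mx_normr_col.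
Qed.

Lemma duhamel_entry p (y u : R -> 'M[R]_(n, p)) (T : R) i j :
  (forall t, is_derive t (1 : R) y (M *m y t + u t)) -> 0 <= T ->
  exists2 c, c \in `[0, T] &
    y T i j = (expmx M T *m y 0) i j + T * (expmx M (T - c) *m u c) i j.
Proof.
move=> y_der T_ge0.
pose Phi t := expmx M (T - t) *m y t.
have Phi_der t : is_derive t (1 : R) Phi (expmx M (T - t) *m u t).
  have E_der := is_derive_reflect (is_derive_expmx M (T - t)).
  have := is_derive_mulmx E_der (y_der t).
  by rewrite mulmxDr mulNmx -expmx_mulmxC -mulmxA addrA addNr add0r.
have Phi_der_ij t := (is_derive_mxP _ _ _).1 (Phi_der t) i j.
have Phi_cont : {within `[0, T], continuous (fun t => Phi t i j)}.
  by apply: derivable_within_continuous => t _; case: (Phi_der_ij t).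
have [c c_in] := MVT_segment T_ge0 (fun t _ => Phi_der_ij t) Phi_cont.
rewrite /Phi subrr subr0 expmx0 mul1mx => /eqP; rewrite subr_eq => /eqP ->.
by exists c; rewrite // addrC mulrC.
Qed.

End ExpmxDecay.

Section ForcedDecay.
Variables (R : realType) (n p : nat) (M : 'M[R]_n) (K0 g0 : R).
Hypotheses (K0_ge0 : 0 <= K0) (g0_gt0 : 0 < g0).
Hypothesis expmx_bound : forall t (v : 'M[R]_(n, p)), 0 <= t ->
  `|expmx M t *m v| <= K0 * expR (- g0 * t) * `|v|.
Variables (y u : R -> 'M[R]_(n, p)) (K1 g1 b X0 : R).
Hypotheses (K1_ge0 : 0 <= K1) (g1_gt0 : 0 < g1) (b_ge0 : 0 <= b) (X0_ge0 : 0 <= X0).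
Hypothesis y_der : forall t, is_derive t (1 : R) y (M *m y t + u t).
Hypothesis y0_bound : `|y 0| <= b * X0.
Hypothesis u_bound : forall t, 0 <= t -> `|u t| <= K1 * expR (- g1 * t) * X0.

Let mu := Num.min g0 g1.

Let mu_gt0 : 0 < mu. Proof. by rewrite lt_min g0_gt0. Qed.

Lemma forced_bound_linear T : 0 <= T ->
  `|y T| <= (K0 * b + T * (K0 * K1)) * expR (- mu * T) * X0.
Proof.
move=> T_ge0; apply: mx_normr_le => [|i j].
  by rewrite !mulr_ge0 ?addr_ge0 ?mulr_ge0 ?expR_ge0.
have [c /[!in_itv] /= /andP[c_ge0 c_leT] ->] := duhamel_entry i j y_der T_ge0.
have decay_le g t : mu <= g -> 0 <= t -> expR (- g * t) <= expR (- mu * t).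
  by move=> mu_le t_ge0; rewrite ler_expR !mulNr lerN2 ler_wpM2r.
have mu_le_g0 : mu <= g0 by rewrite ge_min lexx.
have mu_le_g1 : mu <= g1 by rewrite ge_min lexx orbT.
have free_part : `|(expmx M T *m y 0) i j| <= K0 * b * expR (- mu * T) * X0.
  apply: le_trans (mx_normr_entry _ i j) _; apply: le_trans (expmx_bound _ T_ge0) _.
  have -> : K0 * b * expR (- mu * T) * X0 = K0 * expR (- mu * T) * (b * X0) by ring.
  by apply: ler_pM; rewrite ?mulr_ge0 ?expR_ge0 // ler_wpM2l ?decay_le.
have forced_part : `|(expmx M (T - c) *m u c) i j| <= K0 * K1 * expR (- mu * T) * X0.
  have Tc_ge0 : 0 <= T - c by rewrite subr_ge0.
  apply: le_trans (mx_normr_entry _ i j) _; apply: le_trans (expmx_bound _ Tc_ge0) _.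
  apply: le_trans (_ : _ <= K0 * expR (- g0 * (T - c)) * (K1 * expR (- g1 * c) * X0)) _.
    by rewrite ler_wpM2l ?mulr_ge0 ?expR_ge0 ?u_bound.
  have -> : expR (- mu * T) = expR (- mu * (T - c)) * expR (- mu * c).
    by rewrite -expRD; congr expR; ring.
  have -> : K0 * expR (- g0 * (T - c)) * (K1 * expR (- g1 * c) * X0) =
    K0 * K1 * (expR (- g0 * (T - c)) * expR (- g1 * c)) * X0 by ring.
  rewrite ler_wpM2r // ler_wpM2l ?mulr_ge0 //.
  by rewrite ler_pM ?expR_ge0 ?decay_le.
apply: le_trans (ler_normD _ _) _; rewrite normrM ger0_norm //.
apply: le_trans (lerD free_part (ler_wpM2l T_ge0 forced_part)) _.
lra.
Qed.

Lemma forced_bound T : 0 <= T ->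
  `|y T| <= (K0 * b + K0 * K1 * (mu / 2)^-1) * expR (- (mu / 2) * T) * X0.
Proof.
move=> T_ge0; apply: le_trans (forced_bound_linear T_ge0) _.
have half_gt0 : 0 < mu / 2 by rewrite divr_gt0 ?mu_gt0.
set h := expR (- (mu / 2) * T).
have -> : expR (- mu * T) = h * h by rewrite -expRD -mulrDl -opprD -splitr.
have h_le1 : h <= 1 by rewrite expR_le1 mulNr oppr_le0 mulr_ge0 // ltW.
have -> : (K0 * b + T * (K0 * K1)) * (h * h) * X0 =
  (K0 * b * h + K0 * K1 * (T * h)) * h * X0 by ring.
rewrite ler_wpM2r // ler_wpM2r ?expR_ge0 // lerD //.
  by rewrite ler_piMr ?mulr_ge0.
by rewrite ler_wpM2l ?mulr_ge0 // mulr_expRN_le.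
Qed.

End ForcedDecay.

Lemma lin_exp_stable_forced (R : realType) (n : nat) (M : 'M[R]_n) (K1 g1 b : R) :
  lin_exp_stable M -> 0 <= K1 -> 0 < g1 -> 0 <= b ->
  exists K g : R, [/\ 0 <= K, 0 < g & forall p (y u : R -> 'M[R]_(n, p)) (X0 : R),
    0 <= X0 -> (forall t, is_derive t (1 : R) y (M *m y t + u t)) ->
    `|y 0| <= b * X0 -> (forall t, 0 <= t -> `|u t| <= K1 * expR (- g1 * t) * X0) ->
    forall t, 0 <= t -> `|y t| <= K * expR (- g * t) * X0].
Proof.
move=> /expmx_decay [K0 [g0 [K0_ge0 g0_gt0 expmx_bound]]] K1_ge0 g1_gt0 b_ge0.
have half_gt0 : 0 < Num.min g0 g1 / 2 by rewrite divr_gt0 // lt_min g0_gt0.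
exists (K0 * b + K0 * K1 * (Num.min g0 g1 / 2)^-1), (Num.min g0 g1 / 2).
split=> //; first by rewrite addr_ge0 ?mulr_ge0 // invr_ge0 ltW.
move=> p y u X0 X0_ge0 y_der y0_bound u_bound.
exact: (@forced_bound R n p M K0 g0 K0_ge0 g0_gt0 (expmx_bound p) y u K1 g1 b X0).
Qed.

Lemma gronwall_expR (R : realType) (f df : R -> R) (a : R) :
  (forall s, is_derive s (1 : R) f (df s)) -> (forall s, df s <= - a * f s) ->
  forall t, 0 <= t -> f t <= expR (- a * t) * f 0.
Proof.
move=> f_der df_le t t_ge0.
pose h s := expR (a * s) * f s.
have h_der s : is_derive s (1 : R) h (expR (a * s) * (df s + a * f s)).
  have lin_der : is_derive s (1 : R) (fun s : R => a * s) a.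
    by have := is_deriveZ a (is_derive_id s (1 : R)); rewrite /GRing.scale /= mulr1.
  have exp_der := @is_derive1_comp _ expR (fun s => a * s) s _ _ (is_derive_expR _) lin_der.
  have := is_deriveM exp_der (f_der s).
  by rewrite /GRing.scale /= => /is_derive_eq; apply; rewrite /= mulrDr; ring.
have h_nincr : h t <= h 0.
  apply: (@ler0_derive1_nincr _ h 0 t) => // [s _|].
  - rewrite derive1E derive_val pmulr_rle0 ?expR_gt0 //.
    by rewrite -lerBrDr sub0r -mulNr df_le.
  - by apply: derivable_within_continuous => s _; case: (h_der s).
have -> : f t = expR (- a * t) * h t by rewrite /h mulrA mulNr -expRD addNr expR0 mul1r.
by rewrite ler_wpM2l ?expR_ge0 // (le_trans h_nincr) // /h mulr0 expR0 mul1r.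
Qed.

Section QuadraticForm.
Variables (R : realType) (n : nat).
Implicit Types (M P : 'M[R]_n) (u v w : 'cV[R]_n).

Definition bform M u v : R := (u^T *m M *m v) 0 0.

Lemma qform_bform M v : qform M v = bform M v v. Proof. by []. Qed.

Lemma bformDl M u v w : bform M (u + v) w = bform M u w + bform M v w.
Proof. by rewrite /bform linearD /= !mulmxDl mxE. Qed.

Lemma bformDr M u v w : bform M u (v + w) = bform M u v + bform M u w.
Proof. by rewrite /bform mulmxDr mxE. Qed.

Lemma bformZl a M u v : bform M (a *: u) v = a * bform M u v.
Proof. by rewrite /bform linearZ /= -!scalemxAl mxE. Qed.

Lemma bformZr a M u v : bform M u (a *: v) = a * bform M u v.
Proof. by rewrite /bform -scalemxAr mxE. Qed.

Lemma bform_trmx M u v : bform M u v = bform M^T v u.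
Proof.
rewrite /bform.
have -> : v^T *m M^T *m u = (u^T *m M *m v)^T by rewrite !trmx_mul trmxK mulmxA.
by rewrite [RHS]mxE.
Qed.

Lemma qform_trmx M v : qform M^T v = qform M v.
Proof. by rewrite !qform_bform bform_trmx trmxK. Qed.

Lemma qformD M N v : qform (M + N) v = qform M v + qform N v.
Proof. by rewrite /qform mulmxDr mulmxDl mxE. Qed.

Lemma qformZ a M v : qform (a *: M) v = a * qform M v.
Proof. by rewrite /qform -scalemxAr -scalemxAl mxE. Qed.

Lemma qform_sympart M v : qform (sympart M) v = qform M v.
Proof. by rewrite /sympart qformZ qformD qform_trmx; lra. Qed.

Lemma qform_scalar a v : qform a%:M v = a * (v^T *m v) 0 0.
Proof. by rewrite -scalemx1 qformZ /qform mulmx1. Qed.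

Lemma qform0 M : qform M 0 = 0.
Proof. by rewrite /qform mulmx0 mxE. Qed.

Lemma qform_le_normr M : exists beta, 0 < beta /\ forall v, qform M v <= beta * `|v| ^+ 2.
Proof.
exists (n%:R * (n%:R * `|M|) + 1); split=> [|v]; first by rewrite ltr_wpDl ?mulr_ge0.
rewrite /qform -mulmxA; apply: le_trans (ler_norm _) _.
apply: le_trans (mx_normr_entry _ 0 0) _; apply: le_trans (mx_normr_mulmx _ _) _.
apply: le_trans (_ : _ <= n%:R * `|v| * (n%:R * `|M| * `|v|)) _.
  by rewrite ler_pM ?mulr_ge0 ?ler_wpM2l ?mx_normr_trmx_le ?mx_normr_mulmx.
have -> : n%:R * `|v| * (n%:R * `|M| * `|v|) = n%:R * (n%:R * `|M|) * `|v| ^+ 2 by ring.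
by rewrite ler_wpM2r ?exprn_ge0 // lerDl.
Qed.

Lemma is_derive_qform M (z : R -> 'cV[R]_n) t dz :
  is_derive t (1 : R) z dz ->
  is_derive t (1 : R) (fun s => qform M (z s)) (bform M dz (z t) + bform M (z t) dz).
Proof.
move=> z_der.
have zT_der := is_derive_mulmx (is_derive_trmx z_der) (is_derive_cst M t 1).
have := (is_derive_mxP _ _ _).1 (is_derive_mulmx zT_der z_der) 0 0.
by rewrite mulmx0 addr0 mxE.
Qed.

Lemma is_derive_qform_linear P M (z : R -> 'cV[R]_n) t :
  P^T = P -> is_derive t (1 : R) z (M *m z t) ->
  is_derive t (1 : R) (fun s => qform P (z s)) (2 * qform (sympart (P *m M)) (z t)).
Proof.
move=> P_sym /(is_derive_qform P) /is_derive_eq; apply.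
rewrite qform_sympart bform_trmx P_sym /bform /qform !mulmxA.
by rewrite mulr_natl mulr2n.
Qed.

Lemma posdef_qform_ge0 P : posdef P -> forall v, 0 <= qform P v.
Proof.
move=> [_ P_pos] v; have [->|v_neq0] := eqVneq v 0; first by rewrite qform0.
exact/ltW/P_pos.
Qed.

Lemma posdef_unitmx P : posdef P -> P \in unitmx.
Proof.
move=> [_ P_pos]; rewrite unitmxE unitfE; apply/negP => /det0P [r r_neq0 rP].
by have := P_pos r^T; rewrite trmx_eq0 /qform trmxK rP mul0mx mxE ltxx => /(_ r_neq0).
Qed.

Lemma posdef_cauchy_schwarz P v i : posdef P -> ((P *m v) i 0) ^+ 2 <= P i i * qform P v.
Proof.
move=> P_pd; set w := (P *m v) i 0; pose d : 'cV[R]_n := delta_mx i 0.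
have dP u : bform P d u = (P *m u) i 0 by rewrite /bform trmx_delta -rowE -row_mul mxE.
have Pii_gt0 : 0 < P i i.
  have d_neq0 : d != 0.
    by apply/eqP => /matrixP/(_ i 0); rewrite !mxE !eqxx => /eqP; rewrite oner_eq0.
  by have := P_pd.2 d d_neq0; rewrite qform_bform dP -colE mxE.
have expand s : qform P (v + s *: d) = qform P v + 2 * s * w + s ^+ 2 * P i i.
  rewrite !qform_bform bformDl !bformDr !bformZl !bformZr [bform P v d]bform_trmx P_pd.1.
  by rewrite /w !dP -colE !mxE; ring.
have := mulr_ge0 (ltW Pii_gt0) (posdef_qform_ge0 P_pd (v + (- w / P i i) *: d)).
have -> : P i i * qform P (v + (- w / P i i) *: d) = P i i * qform P v - w ^+ 2.
  by rewrite expand; field; rewrite gt_eqF.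
lra.
Qed.

Lemma posdef_normr_le P : posdef P ->
  exists C, 0 <= C /\ forall v, `|v| ^+ 2 <= C * qform P v.
Proof.
move=> P_pd; exists ((n%:R * `|invmx P|) ^+ 2 * `|P|).
split=> [|v]; first by rewrite mulr_ge0 ?exprn_ge0 ?mulr_ge0.
have q_ge0 := posdef_qform_ge0 P_pd v.
have v_le : `|v| <= n%:R * `|invmx P| * `|P *m v|.
  by rewrite -{1}(mulKmx (posdef_unitmx P_pd) v) mx_normr_mulmx.
have Pv_le : `|P *m v| ^+ 2 <= `|P| * qform P v.
  apply: mx_normr_sqr_le_entries => [|i j]; first by rewrite mulr_ge0.
  rewrite (ord1 j); apply: le_trans (posdef_cauchy_schwarz v i P_pd) _.
  by rewrite ler_wpM2r // (le_trans (ler_norm _)) ?mx_normr_entry.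
apply: le_trans (lerXn2r 2 _ _ v_le) _; rewrite ?nnegrE ?mulr_ge0 //.
by rewrite [leLHS]exprMn -[leRHS]mulrA ler_wpM2l ?exprn_ge0.
Qed.

End QuadraticForm.

Lemma lyapunov_lin_exp_stable (R : realType) (n : nat) (M P : 'M[R]_n) (e : R) :
  posdef P -> 0 < e -> negdef (sympart (P *m M) + e%:M) -> lin_exp_stable M.
Proof.
move=> P_pd e_gt0 [_ P_neg].
have [beta [beta_gt0 V_le]] := qform_le_normr P.
have [C [C_ge0 normr_le_V]] := posdef_normr_le P_pd.
pose a := 2 * e / beta.
have a_gt0 : 0 < a by rewrite divr_gt0 ?mulr_gt0.
have dissipation v : 2 * qform (sympart (P *m M)) v <= - a * qform P v.
  have [->|v_neq0] := eqVneq v 0; first by rewrite !qform0 !mulr0.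
  have := P_neg v v_neq0; rewrite qformD qform_scalar => neg.
  have sqr_le : e * `|v| ^+ 2 <= e * (v^T *m v) 0 0.
    by rewrite ler_wpM2l ?mx_normr_sqr_le // ltW.
  have aV_le : a * qform P v <= 2 * e * `|v| ^+ 2.
    have -> : 2 * e = a * beta by rewrite /a divfK ?gt_eqF.
    by rewrite -mulrA ler_wpM2l ?V_le // ltW.
  lra.
exists (Num.sqrt (C * beta)), (a / 2); split=> [|z z_der t t_ge0]; first by rewrite divr_gt0.
have V_decay := gronwall_expR (fun s => is_derive_qform_linear P_pd.1 (z_der s))
  (fun s => dissipation (z s)) t_ge0.
have : `|z t| ^+ 2 <= (Num.sqrt (C * beta) * expR (- (a / 2) * t) * `|z 0|) ^+ 2.
  rewrite !exprMn sqr_sqrtr ?mulr_ge0 // ?(ltW beta_gt0) //.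
  rewrite [expR _ ^+ 2]expr2 -expRD -mulrDl -opprD -splitr.
  apply: le_trans (normr_le_V _) _; rewrite -!mulrA ler_wpM2l //.
  by apply: le_trans V_decay _; rewrite mulrCA ler_wpM2l ?expR_ge0 ?V_le.
by rewrite ler_pXn2r // nnegrE ?mulr_ge0 ?sqrtr_ge0 ?expR_ge0.
Qed.

Section CoupledMatrixODE.
Variables (R : realType) (n m : nat) (A B : 'M[R]_n) (N : 'M[R]_m.+1).

Definition coupled_mx_solution (Y : R -> 'M[R]_(n, m.+1)) :=
  forall t, is_derive t (1 : R) Y (A *m Y t + B *m Y t *m N).

Definition eigen_poly (r : seq R) : {poly R} := \prod_(a <- r) ('X - a%:P).

Definition eigen_filter (r : seq R) (Y : R -> 'M[R]_(n, m.+1)) t :=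
  Y t *m horner_mx N (eigen_poly r).

Lemma horner_eigen_poly_rcons r a :
  horner_mx N (eigen_poly (rcons r a)) = horner_mx N (eigen_poly r) *m (N - a%:M).
Proof. by rewrite /eigen_poly big_rcons rmorphM rmorphB /= horner_mx_X horner_mx_C. Qed.

Lemma horner_mx_mulmxC (p : {poly R}) : N *m horner_mx N p = horner_mx N p *m N.
Proof. by rewrite -{1 4}(horner_mx_X N) !mulmxE -!rmorphM mulrC. Qed.

Lemma is_derive_filtered r a Y t : coupled_mx_solution Y ->
  is_derive t (1 : R) (eigen_filter r Y)
    ((A + a *: B) *m eigen_filter r Y t + B *m eigen_filter (rcons r a) Y t).
Proof.
move=> Y_sol; rewrite /eigen_filter.
have := is_derive_mulmx (Y_sol t) (is_derive_cst (horner_mx N (eigen_poly r)) t 1).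
rewrite mulmx0 addr0 => /is_derive_eq; apply.
rewrite /cst horner_eigen_poly_rcons !mulmxA mulmxDl.
rewrite -(mulmxA (B *m Y t)) mulmxBr -horner_mx_mulmxC mul_mx_scalar.
rewrite mulmxBr !mulmxA -scalemxAr !mulmxDl -!scalemxAl.
by rewrite -addrA [a *: _ + _]addrC subrK.
Qed.

Lemma filtered_decay s : forall r, horner_mx N (eigen_poly (r ++ s)) = 0 ->
  {in s, forall a, lin_exp_stable (A + a *: B)} ->
  exists K g : R, [/\ 0 <= K, 0 < g & forall Y, coupled_mx_solution Y ->
    forall t, 0 <= t -> `|eigen_filter r Y t| <= K * expR (- g * t) * `|Y 0|].
Proof.
elim: s => [|a s IHs] r.
  rewrite cats0 => pN0 _; exists 0, 1; split=> // Y _ t _.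
  by rewrite /eigen_filter pN0 mulmx0 normr0 !mul0r.
rewrite -cat_rcons => pN0 stable.
have [K' [g' [K'_ge0 g'_gt0 next_decay]]] : exists K g : R, [/\ 0 <= K, 0 < g &
    forall Y, coupled_mx_solution Y -> forall t, 0 <= t ->
      `|eigen_filter (rcons r a) Y t| <= K * expR (- g * t) * `|Y 0|].
  by apply: IHs pN0 _ => x x_s; apply: stable; rewrite inE x_s orbT.
have [K [g [K_ge0 g_gt0 forced]]] := lin_exp_stable_forced (stable a (mem_head a s))
  (mulr_ge0 (mulr_ge0 (ler0n _ n) (normr_ge0 B)) K'_ge0) g'_gt0
  (mulr_ge0 (ler0n _ m.+1) (normr_ge0 (horner_mx N (eigen_poly r)))).
exists K, g; split=> // Y Y_sol t t_ge0.
apply: (forced _ _ (fun t => B *m eigen_filter (rcons r a) Y t)) => //.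
- by move=> s'; exact: is_derive_filtered.
- by apply: le_trans (mx_normr_mulmx _ _) _; rewrite mulrAC.
move=> s' s'_ge0; apply: le_trans (mx_normr_mulmx _ _) _.
by rewrite -!mulrA ler_wpM2l ?mulr_ge0 // ler_wpM2l // !mulrA next_decay.
Qed.

Lemma coupled_mx_exp_decay s :
  char_poly N = eigen_poly s -> {in s, forall a, lin_exp_stable (A + a *: B)} ->
  exists K g : R, [/\ 0 <= K, 0 < g & forall Y, coupled_mx_solution Y ->
    forall t, 0 <= t -> `|Y t| <= K * expR (- g * t) * `|Y 0|].
Proof.
move=> charN stable.
have pN0 : horner_mx N (eigen_poly ([::] ++ s)) = 0 by rewrite cat0s -charN Cayley_Hamilton.
have [K [g [K_ge0 g_gt0 decay]]] := filtered_decay pN0 stable.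
exists K, g; split=> // Y Y_sol t t_ge0.
by have := decay Y Y_sol t t_ge0; rewrite /eigen_filter /eigen_poly big_nil rmorph1 mulmx1.
Qed.

End CoupledMatrixODE.

Lemma char_poly_trmx (R : comNzRingType) (n : nat) (M : 'M[R]_n) :
  char_poly M^T = char_poly M.
Proof.
rewrite /char_poly -det_tr; congr (\det _).
by apply/matrixP => i j; rewrite !mxE eq_sym.
Qed.

Definition stack_cols (R : realType) (n m : nat) (x : 'I_m -> R -> 'cV[R]_n) t :
  'M[R]_(n, m) := \matrix_(a, i) x i t a 0.

Lemma col_stack_cols (R : realType) (n m : nat) (x : 'I_m -> R -> 'cV[R]_n) t i :
  col i (stack_cols x t) = x i t.
Proof. by apply/matrixP => a b; rewrite (ord1 b) !mxE. Qed.

Lemma coupled_solution_mx (R : realType) (n q m : nat) (A : 'M[R]_n) (C : 'M[R]_(q, n))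
    (F : 'M[R]_(n, q)) (c : R) (L : 'M[R]_m.+1) (x : 'I_m.+1 -> R -> 'cV[R]_n) :
  coupled_solution A C F c L x ->
  coupled_mx_solution A (c *: (F *m C)) L^T (stack_cols x).
Proof.
move=> x_sol t; apply/is_derive_mxP => a i; under eq_fun do rewrite mxE.
have := (is_derive_mxP _ _ _).1 (x_sol i t) a 0; move/is_derive_eq; apply.
have colM (M : 'M[R]_n) j : (M *m stack_cols x t) a j = (M *m x j t) a 0.
  by rewrite -(col_stack_cols x t j) colE mulmxA -colE [RHS]mxE.
rewrite [RHS]mxE colM [LHS]mxE; congr (_ + _).
rewrite [LHS]mxE summxE [RHS]mxE mulr_sumr; apply: eq_bigr => j _.
by rewrite colM -scalemxAl -mulmxA !mxE; ring.
Qed.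

Theorem theorem6 (R : realType) (n q m : nat)
  (A : 'M[R]_n) (C : 'M[R]_(q, n)) (F : 'M[R]_(n, q)) (c : R) (L : 'M[R]_m)
  (eps : R) (lambda : 'I_m -> R) :
  0 < c ->
  irreducible_mx L ->
  \rank L = m.-1 ->
  (forall i j : 'I_m, i != j -> 0 <= L i j) ->
  (forall i : 'I_m, \sum_(j < m) L i j = 0) ->
  0 < eps ->
  (* lambda_1, ..., lambda_m are the eigenvalues of Lt (with multiplicity), ordered *)
  char_poly (pinned L eps) = \prod_(k < m) ('X - (lambda k)%:P) ->
  (forall k : 'I_m, lambda k < 0) ->
  (forall k l : 'I_m, (k <= l)%N -> lambda l <= lambda k) ->
  ((forall k : 'I_m, lin_exp_stable (A + (c * lambda k) *: (F *m C)))
   \/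
   (exists (P : 'M[R]_n) (e : R), posdef P /\ 0 < e /\
      forall k : 'I_m,
        negdef (sympart (P *m (A + (c * lambda k) *: (F *m C))) + e%:M))) ->
  coupled_exp_stable A C F c (pinned L eps).
Proof.
move=> _ _ _ _ _ _ charL _ _ stable_cases.
have stable k : lin_exp_stable (A + (c * lambda k) *: (F *m C)).
  case: stable_cases => [//|[P [e [P_pd [e_gt0 P_neg]]]]].
  exact: lyapunov_lin_exp_stable P_pd e_gt0 (P_neg k).
clear stable_cases; case: m L lambda charL stable => [|m] L lambda charL stable.
  by exists 0, 1; split=> // x _ t _; rewrite !big_ord0 mulr0.
pose s := [seq lambda k | k <- index_enum 'I_m.+1].
have char_s : char_poly (pinned L eps)^T = eigen_poly s.
  by rewrite char_poly_trmx charL /eigen_poly big_map.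
have stable_s : {in s, forall a, lin_exp_stable (A + a *: (c *: (F *m C)))}.
  by move=> _ /mapP[k _ ->]; rewrite scalerA mulrC.
have [K [g [K_ge0 g_gt0 decay]]] := coupled_mx_exp_decay char_s stable_s.
exists (m.+1%:R * K), g; split=> // x x_sol t t_ge0.
have sum_cols s' : \sum_i `|x i s'| = \sum_i `|col i (stack_cols x s')|.
  by apply: eq_bigr => i _; rewrite col_stack_cols.
rewrite !sum_cols; apply: le_trans (sum_normr_col_le _) _.
rewrite -!mulrA ler_wpM2l // mulrA.
apply: le_trans (decay _ (coupled_solution_mx x_sol) t t_ge0) _.
by rewrite ler_wpM2l ?mulr_ge0 ?expR_ge0 ?mx_normr_le_sum_col.
Qed.
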